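(* Let $I$ be a finite set, and let $Y=(Y_i)_{i\in I}$ and $Y'=(Y'_i)_{i\in I}$ be two independent vectors of independent random variables all having a common distribution. For $S\subseteq I$ let $Y^S_i=Y'_i$ if $i\in S$ and $Y^S_i=Y_i$ otherwise. Let $f:\mathbb{R}^I\to\mathbb{R}$ satisfy $\mathbb{E}[f(Y)^2]<\infty$, and let $\mathscr{S},\tilde{\mathscr{S}}$ be random subsets of $I$, independent of $(Y,Y')$, with $\mathscr{S}\subseteq\tilde{\mathscr{S}}$ almost surely. Then \[ \operatorname{Cov}\big(f(Y),f(Y^{\mathscr{S}})\big)\ge\operatorname{Cov}\big(f(Y),f(Y^{\tilde{\mathscr{S}}})\big). \] *)

From HB Require Import structures.
From mathcomp Require Import all_boot all_order all_algebra.
From mathcomp Require Import all_classical all_reals all_analysis.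
Set Implicit Arguments. Unset Strict Implicit. Unset Printing Implicit Defensive.
Import Order.TTheory GRing.Theory Num.Theory.
Local Open Scope classical_set_scope.
Local Open Scope ring_scope.

Definition cylinders (I : finType) (R : realType) : set (set (I -> R)) :=
  [set C | exists i : I, exists2 B : set R, measurable B & C = [set x | B (x i)]].

Definition borel_fun (I : finType) (R : realType) (f : (I -> R) -> R) : Prop :=
  forall B : set R, measurable B ->
    smallest (sigma_algebra setT) (@cylinders I R) (f @^-1` B).

Definition resample (I : finType) (Omega R : Type)
  (Y Y' : I -> Omega -> R) (S : {set I}) (w : Omega) : I -> R :=
  fun i => if i \in S then Y' i w else Y i w.

Definition vec (I : finType) (Omega R : Type) (Y : I -> Omega -> R)
  (w : Omega) : I -> R := fun i => Y i w.

(* Mutual independence of a finite family of sub-collections of events: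
   for every choice of one event per index, the probability of the
   intersection is the product of the probabilities (subfamilies are covered
   since every collection below contains the sure event). *)
Definition mutual_indep (d : measure_display) (Omega : measurableType d)
  (R : realType) (P : probability Omega R) (K : finType)
  (E : K -> set (set Omega)) : Prop :=
  forall A : K -> set Omega, (forall k, E k (A k)) ->
    P (\bigcap_(k in [set: K]) A k) = (\prod_(k : K) P (A k))%E.

(* Index set for the joint family: Some (inl i) = Y_i, Some (inr i) = Y'_i,
   None = the pair of random sets (S, S~). *)
Definition lemma6p1_events (d : measure_display) (Omega : measurableType d)
  (R : realType) (I : finType) (Y Y' : I -> Omega -> R)
  (S S2 : Omega -> {set I}) (k : option (I + I)) : set (set Omega) :=
  match k with
  | Some (inl i) => [set Y i @^-1` B | B in [set B : set R | measurable B]]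
  | Some (inr i) => [set Y' i @^-1` B | B in [set B : set R | measurable B]]
  | None => [set [set w | (S w, S2 w) \in Q] | Q in [set: {set ({set I} * {set I})}]]
  end.

From HB Require Import structures.
From mathcomp Require Import all_boot all_order all_algebra.
From mathcomp Require Import all_classical all_reals all_analysis.
From mathcomp Require Import measurable_realfun lra ring.
Set Implicit Arguments. Unset Strict Implicit. Unset Printing Implicit Defensive.
Import Order.TTheory GRing.Theory Num.Theory.
Import numFieldNormedType.Exports.
Local Open Scope classical_set_scope.
Local Open Scope ring_scope.

(* Fix [A \subset B] and put [C := B :\: A].  The function
   [Psi (y, y') := f (y) - f (y^C)] does not read the [y'_i] with [i \in A].
   Conditionally on all the coordinates outside [A], [Psi (Y, Y')] and
   [Psi ((Y, Y')^A)] are then the same function of two independent copies of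
   [(Y_i)_(i \in A)], so [E[Psi (Y, Y') Psi ((Y, Y')^A)]] is the mean of a
   square, hence nonnegative (first for bounded [Psi], then by truncation and
   dominated convergence).  As resampling a fixed set preserves the joint law,
   this expectation equals [2 (E[f(Y) f(Y^A)] - E[f(Y) f(Y^B)])].
   For random sets independent of [(Y, Y')], split according to the value of
   [(S, S~)]: values with [S] not contained in [S~] have probability zero, and
   [E[f(Y^S)] = E[f(Y)]], so the covariances compare like the mixed moments. *)

Section Boxes.
Context (R : realType) (K : finType).

Definition boxes : set (set (K -> R)) :=
  [set X | exists2 B : K -> set R, (forall k, measurable (B k)) &
     X = [set x | forall k, B k (x k)]].

(* The product sigma-algebra on [R^K]; unlike cylinders, boxes form a
   pi-system, as the uniqueness of measures requires. *)
Definition boxT := g_sigma_algebraType boxes.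

Lemma boxesT : boxes setT.
Proof. by exists (fun _ => setT) => //; apply/seteqP; split. Qed.

Lemma boxes_setI : setI_closed boxes.
Proof.
move=> _ _ [B mB ->] [C mC ->]; exists (fun k => B k `&` C k).
  by move=> k; apply: measurableI.
apply/seteqP; split => x /=; first by move=> [xB xC] k; split.
by move=> xBC; split => k; case: (xBC k).
Qed.

Lemma measurable_box (B : K -> set R) : (forall k, measurable (B k)) ->
  measurable ([set x | forall k, B k (x k)] : set boxT).
Proof. by move=> mB; apply: sub_sigma_algebra; exists B. Qed.

Lemma measurable_coord k : measurable_fun setT (fun x : boxT => x k).
Proof.
move=> _ B mB; rewrite setTI.
have -> : (fun x : boxT => x k) @^-1` B =
    [set x | forall j, (if j == k then B else setT) (x j)].
  apply/seteqP; split => x /=; first by move=> Bx j; case: (j =P k) => [->|].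
  by move=> /(_ k); rewrite eqxx.
by apply: (@measurable_box (fun j => if j == k then B else setT)) => j; case: eqP.
Qed.

Lemma measurable_fun_coords d (T : measurableType d) (F : T -> boxT) :
  (forall k, measurable_fun setT (fun t => F t k)) -> measurable_fun setT F.
Proof.
move=> mF; apply: (@measurability _ _ _ _ setT F boxes erefl).
move=> _ [_ [B mB ->] <-].
have -> : setT `&` F @^-1` [set x | forall k, B k (x k)] =
    \bigcap_(k in setT) (setT `&` (fun t => F t k) @^-1` B k).
  apply/seteqP; split => t /=; first by move=> [_ FB] k _; split.
  by move=> FB; split => // k; case: (FB k I).
apply: fin_bigcap_measurable; first exact: finite_finset.
by move=> k _; apply: mF.
Qed.

Definition boxes2 : set (set (boxT * boxT)) :=
  [set A `*` B | A in boxes & B in boxes].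

Lemma boxes2_measurable : boxes2 `<=` measurable.
Proof.
by move=> _ [_ [A mA ->] [_ [B mB ->]] <-]; apply: measurableX; apply: measurable_box.
Qed.

Lemma boxes2_setI : setI_closed boxes2.
Proof.
move=> _ _ [A bA [B bB <-]] [A' bA' [B' bB' <-]].
rewrite -setXI; exists (A `&` A'); first exact: boxes_setI.
by exists (B `&` B') => //; exact: boxes_setI.
Qed.

Lemma boxes2T : boxes2 setT.
Proof. by exists setT; [exact: boxesT | exists setT; [exact: boxesT | rewrite setXTT]]. Qed.

Lemma measurable_prod_boxes : @measurable _ (boxT * boxT)%type = <<s boxes2 >>.
Proof.
rewrite measurable_prod_measurableType eqEsubset; split.
  apply: smallest_sub; first exact: smallest_sigma_algebra.
  move=> _ [A mA [B mB <-]].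
  pose T2 := g_sigma_algebraType boxes2.
  have mfst : measurable_fun setT (fst : T2 -> boxT).
    apply: (@measurability _ _ T2 boxT setT fst boxes erefl) => _ [X bX <-].
    apply: sub_sigma_algebra; exists X => //; exists setT; first exact: boxesT.
    by rewrite setTI; apply/seteqP; split => -[x y] /=; tauto.
  have msnd : measurable_fun setT (snd : T2 -> boxT).
    apply: (@measurability _ _ T2 boxT setT snd boxes erefl) => _ [X bX <-].
    apply: sub_sigma_algebra; exists setT; first exact: boxesT.
    by exists X => //; rewrite setTI; apply/seteqP; split => -[x y] /=; tauto.
  rewrite (_ : A `*` B = (setT `&` fst @^-1` A) `&` (setT `&` snd @^-1` B)).
    exact: (@measurableI _ T2 _ _ (mfst measurableT A mA) (msnd measurableT B mB)).
  by rewrite !setTI; apply/seteqP; split => -[x y] /=; tauto.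
apply: smallest_sub; first exact: smallest_sigma_algebra.
move=> _ [A bA [B bB <-]]; apply: sub_sigma_algebra.
by exists A; [exact: sub_sigma_algebra | exists B => //; exact: sub_sigma_algebra].
Qed.

End Boxes.

Section Cylinders.
Context (R : realType) (I : finType).

Definition cylT := g_sigma_algebraType (@cylinders I R).

Lemma measurable_fun_borel (f : (I -> R) -> R) :
  borel_fun f -> measurable_fun setT (f : cylT -> R).
Proof. by move=> mf _ B mB; rewrite setTI; exact: mf. Qed.

Lemma measurable_fun_cyl d (T : measurableType d) (F : T -> cylT) :
  (forall i, measurable_fun setT (fun t => F t i)) -> measurable_fun setT F.
Proof.
move=> mF; apply: (@measurability _ _ _ _ setT F (@cylinders I R) erefl).
by move=> _ [_ [i [B mB ->]] <-]; exact: (mF i measurableT B mB).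
Qed.

End Cylinders.

Definition mfun_of d1 d2 (T1 : measurableType d1) (T2 : measurableType d2)
  (f : T1 -> T2) (mf : measurable_fun setT f) : {mfun T1 >-> T2} :=
  HB.pack f (isMeasurableFun.Build _ _ _ _ f mf).

Lemma measurable_const_set (R : realType) (b : Prop) : measurable [set _ : R | b].
Proof.
case: (pselect b) => h.
  by rewrite (_ : [set _ | b] = setT) //; apply/seteqP; split.
by rewrite (_ : [set _ | b] = set0) //; apply/seteqP; split.
Qed.

Section Integrability.
Context d (T : measurableType d) (R : realType) (mu : probability T R).

Lemma integrable_bounded (g : T -> R) (M : R) :
  measurable_fun setT g -> (forall t, `|g t| <= M) -> mu.-integrable setT (EFin \o g).
Proof.
move=> mg gM; apply: (@le_integrable _ _ _ mu setT measurableT _ (EFin \o cst M)).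
- exact/measurable_EFinP.
- by move=> t _ /=; rewrite lee_fin (le_trans (gM t) (ler_norm M)).
- exact: finite_measure_integrable_cst.
Qed.

Lemma integrable_of_sqr (x : T -> R) : measurable_fun setT x ->
  mu.-integrable setT (fun t => (x t ^+ 2)%:E) -> mu.-integrable setT (EFin \o x).
Proof.
move=> mx ix.
apply: (@le_integrable _ _ _ mu setT measurableT _ (fun t => (1 + x t ^+ 2)%:E)).
- exact/measurable_EFinP.
- move=> t _ /=; rewrite lee_fin (@ger0_norm _ (1 + x t ^+ 2)) ?addr_ge0 ?sqr_ge0 //.
  by rewrite ler_norml; apply/andP; split; nra.
- under eq_fun do rewrite EFinD.
  by apply: integrableD => //; exact: finite_measure_integrable_cst.
Qed.

Lemma abs_mul_le_sqrD (x y : R) : `|x * y| <= x ^+ 2 + y ^+ 2.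
Proof. by rewrite ler_norml; apply/andP; split; nra. Qed.

Lemma integrable_mul_of_sqr (x y : T -> R) :
  measurable_fun setT x -> measurable_fun setT y ->
  mu.-integrable setT (fun t => (x t ^+ 2)%:E) ->
  mu.-integrable setT (fun t => (y t ^+ 2)%:E) ->
  mu.-integrable setT (EFin \o (fun t => x t * y t)).
Proof.
move=> mx my ix iy.
apply: (@le_integrable _ _ _ mu setT measurableT _ (fun t => (x t ^+ 2 + y t ^+ 2)%:E)).
- by apply/measurable_EFinP; exact: measurable_funM.
- move=> t _ /=; rewrite lee_fin; apply: (le_trans (abs_mul_le_sqrD _ _)).
  by rewrite ger0_norm // addr_ge0 // sqr_ge0.
- by under eq_fun do rewrite EFinD; exact: integrableD.
Qed.

Lemma sqr_integrable_subr (x y : T -> R) :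
  measurable_fun setT x -> measurable_fun setT y ->
  mu.-integrable setT (fun t => (x t ^+ 2)%:E) ->
  mu.-integrable setT (fun t => (y t ^+ 2)%:E) ->
  mu.-integrable setT (fun t => ((x t - y t) ^+ 2)%:E).
Proof.
move=> mx my ix iy.
apply: (@le_integrable _ _ _ mu setT measurableT _ (fun t => (2 * (x t ^+ 2 + y t ^+ 2))%:E)).
- by apply/measurable_EFinP; apply: measurable_funX; exact: measurable_funB.
- move=> t _ /=; rewrite lee_fin ger0_norm ?sqr_ge0 // ger0_norm; last first.
    by rewrite mulr_ge0 // addr_ge0 // sqr_ge0.
  by have := sqr_ge0 (x t + y t); nra.
- under eq_fun do rewrite EFinM; apply: integrableZl => //.
  by under eq_fun do rewrite EFinD; exact: integrableD.
Qed.

End Integrability.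

Section Clamp.
Context (R : realType).

Definition clamp (n : nat) (r : R) : R := Num.max (- n%:R) (Num.min r n%:R).

Lemma clamp_norm_le n r : `|clamp n r| <= n%:R.
Proof.
have n0 : 0 <= n%:R :> R by [].
by rewrite /clamp ler_norml le_max ge_max ge_min !lexx orbT /= andbT; lra.
Qed.

Lemma clamp_sqr_le n r : clamp n r ^+ 2 <= r ^+ 2.
Proof.
have n0 : 0 <= n%:R :> R by [].
by rewrite /clamp; case: (leP r n%:R) => ?; case: (leP (- n%:R) _) => ?; nra.
Qed.

Lemma clamp_id n r : `|r| <= n%:R -> clamp n r = r.
Proof.
rewrite ler_norml => /andP[r_ge r_le].
by rewrite /clamp (min_l r_le) (max_r r_ge).
Qed.

Lemma measurable_clamp d (T : measurableType d) n (g : T -> R) :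
  measurable_fun setT g -> measurable_fun setT (fun t => clamp n (g t)).
Proof.
move=> mg; apply: measurable_maxr; first exact: measurable_cst.
by apply: measurable_minr => //; exact: measurable_cst.
Qed.

End Clamp.

Lemma probability_preimage_constI d (T : measurableType d) (R : realType)
    (P : probability T R) (X : T -> R) (b : Prop) (D : set R) :
  P (X @^-1` ([set _ | b] `&` D)) = (P (X @^-1` [set _ | b]) * P (X @^-1` D))%E.
Proof.
case: (pselect b) => h.
  rewrite (_ : [set _ | b] = setT); last by apply/seteqP; split.
  by rewrite setTI preimage_setT probability_setT mul1e.
rewrite (_ : [set _ | b] = set0); last by apply/seteqP; split.
by rewrite set0I preimage_set0 measure0 mul0e.
Qed.

Section IndependentCoordinates.
Context d (Omega : measurableType d) (R : realType) (P : probability Omega R)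
  (K : finType).
Local Notation V := (boxT R K).

Definition coords_indep (Z : Omega -> V) := forall C : K -> set R,
  (forall k, measurable (C k)) ->
  P [set w | forall k, C k (Z w k)] = (\prod_k P ((fun w => Z w k) @^-1` C k))%E.

Variable Z : Omega -> V.
Hypotheses (mZ : forall k, measurable_fun setT (fun w => Z w k))
  (indepZ : coords_indep Z).

Lemma measurable_vec : measurable_fun setT Z.
Proof. exact: measurable_fun_coords. Qed.

Definition vmask (p : pred K) (z : V) : V := fun k => if p k then z k else 0.

Definition vmask_set (p : pred K) (B : K -> set R) k : set R :=
  if p k then B k else [set _ | B k 0].

Lemma measurable_vmask_set p B : (forall k, measurable (B k)) ->
  forall k, measurable (vmask_set p B k).
Proof.
by move=> mB k; rewrite /vmask_set; case: (p k); [exact: mB | exact: measurable_const_set].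
Qed.

Lemma measurable_vmask p : measurable_fun setT (fun w => vmask p (Z w)).
Proof.
apply: measurable_fun_coords => k; rewrite /vmask.
by case: (p k); [exact: mZ | exact: measurable_cst].
Qed.

Lemma preimage_vmask_box p (B : K -> set R) :
  [set w | forall k, B k (vmask p (Z w) k)] = [set w | forall k, vmask_set p B k (Z w k)].
Proof.
by apply/seteqP; split => w /= h k; have := h k; rewrite /vmask /vmask_set; case: (p k).
Qed.

Lemma indep_masks_box p q (B B' : K -> set R) : (forall k, ~~ (p k && q k)) ->
  (forall k, measurable (B k)) -> (forall k, measurable (B' k)) ->
  P ([set w | forall k, B k (vmask p (Z w) k)] `&`
     [set w | forall k, B' k (vmask q (Z w) k)]) =
  (P [set w | forall k, B k (vmask p (Z w) k)] *
   P [set w | forall k, B' k (vmask q (Z w) k)])%E.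
Proof.
move=> pq mB mB'; rewrite !preimage_vmask_box !indepZ; try exact: measurable_vmask_set.
have -> : [set w | forall k, vmask_set p B k (Z w k)] `&`
          [set w | forall k, vmask_set q B' k (Z w k)] =
          [set w | forall k, (vmask_set p B k `&` vmask_set q B' k) (Z w k)].
  apply/seteqP; split => w /=; first by move=> [h1 h2] k; split.
  by move=> h; split => k; case: (h k).
rewrite (indepZ (C := fun k => vmask_set p B k `&` vmask_set q B' k)) -?big_split /=;
  last by move=> k; apply: measurableI; exact: measurable_vmask_set.
apply: eq_bigr => k _; move: (pq k); rewrite /vmask_set.
case: (p k); case: (q k) => //= _; rewrite ?probability_preimage_constI //.
by rewrite setIC probability_preimage_constI muleC.
Qed.

Definition law_mask p := distribution P (mfun_of (measurable_vmask p)).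

Definition law_masks p q :=
  distribution P (mfun_of (measurable_fun_pair (measurable_vmask p) (measurable_vmask q))).

Lemma law_masks_prod p q : (forall k, ~~ (p k && q k)) ->
  forall X, measurable X -> law_masks p q X = (law_mask p \x law_mask q)%E X.
Proof.
move=> pq X mX.
have gX : <<s @boxes2 R K >> X by rewrite -measurable_prod_boxes.
apply: (g_sigma_algebra_measure_unique (@boxes2 R K) (@boxes2_measurable _ _)
  (fun _ => setT)) => //.
- by move=> _; exact: boxes2T.
- by apply/seteqP; split => // x _; exists 0%N.
- exact: boxes2_setI.
- move=> _ [_ [b mb ->] [_ [b' mb' ->]] <-].
  rewrite [RHS]product_measure1E; [|exact: measurable_box|exact: measurable_box].
  rewrite /law_masks /law_mask /distribution /pushforward /= -indep_masks_box //.
- move=> k; apply: (le_lt_trans (probability_le1 (law_masks p q) measurableT)).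
  by rewrite ltry.
Qed.

Lemma integral_masks p q (Phi : V * V -> R) : (forall k, ~~ (p k && q k)) ->
  measurable_fun setT Phi ->
  P.-integrable setT (fun w => (Phi (vmask p (Z w), vmask q (Z w)))%:E) ->
  (\int[P]_w (Phi (vmask p (Z w), vmask q (Z w)))%:E =
   \int[law_mask p]_x \int[law_mask q]_y (Phi (x, y))%:E)%E.
Proof.
move=> pq mPhi iPhi.
have mpq := measurable_fun_pair (measurable_vmask p) (measurable_vmask q).
have law_pq := law_masks_prod pq.
have iPhi' : (law_masks p q).-integrable setT (EFin \o Phi).
  apply: (integrable_pushforward mpq) => //; exact/measurable_EFinP.
have -> : (\int[P]_w (Phi (vmask p (Z w), vmask q (Z w)))%:E =
           \int[law_masks p q]_z (Phi z)%:E)%E.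
  rewrite /law_masks /distribution integral_pushforward //; exact/measurable_EFinP.
rewrite (eq_measure_integral _ (fun A mA _ => law_pq A mA)) -integral12_prod_meas1 //.
apply/integrableP; split; first exact/measurable_EFinP.
rewrite -(eq_measure_integral _ (fun A mA _ => law_pq A mA)).
by case/integrableP : iPhi'.
Qed.

Lemma integral_masks_mul p q (g h : V -> R) : (forall k, ~~ (p k && q k)) ->
  measurable_fun setT g -> measurable_fun setT h ->
  P.-integrable setT (EFin \o (fun w => g (vmask p (Z w)))) ->
  P.-integrable setT (EFin \o (fun w => h (vmask q (Z w)))) ->
  P.-integrable setT (EFin \o (fun w => g (vmask p (Z w)) * h (vmask q (Z w)))) ->
  (\int[P]_w (g (vmask p (Z w)) * h (vmask q (Z w)))%:E =
   \int[P]_w (g (vmask p (Z w)))%:E * \int[P]_w (h (vmask q (Z w)))%:E)%E.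
Proof.
move=> pq mg mh ig ih igh.
have law_integral r (u : V -> R) : measurable_fun setT u ->
    P.-integrable setT (EFin \o (fun w => u (vmask r (Z w)))) ->
    (law_mask r).-integrable setT (EFin \o u) /\
    (\int[law_mask r]_x (u x)%:E = \int[P]_w (u (vmask r (Z w)))%:E)%E.
  move=> mu iu; split.
    by apply: (integrable_pushforward (measurable_vmask r)) => //; exact/measurable_EFinP.
  by rewrite /law_mask /distribution integral_pushforward //; exact/measurable_EFinP.
have [ig' <-] := law_integral p g mg ig.
have [ih' <-] := law_integral q h mh ih.
rewrite (@integral_masks p q (fun x => g x.1 * h x.2)) //; last first.
  by apply: measurable_funM; apply: measurableT_comp.
have hfin := integrable_fin_num measurableT ih'.
have inner x : (\int[law_mask q]_y (g x * h y)%:E =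
                (g x)%:E * \int[law_mask q]_y (h y)%:E)%E.
  by under eq_integral do rewrite EFinM; rewrite integralZl.
under eq_integral do rewrite /= inner.
by rewrite -(fineK hfin) integralZr.
Qed.

Definition relabel (s : K -> K) (z : V) : V := fun k => z (s k).

Lemma measurable_relabel s : measurable_fun setT (relabel s).
Proof. by apply: measurable_fun_coords => k; exact: measurable_coord. Qed.

Section Relabel.
Variable s : K -> K.
Hypotheses (sK : involutive s)
  (s_law : forall k C, measurable C ->
     P ((fun w => Z w (s k)) @^-1` C) = P ((fun w => Z w k) @^-1` C)).

Let mZs : measurable_fun setT (fun w => relabel s (Z w)).
Proof. exact: measurableT_comp (measurable_relabel s) measurable_vec. Qed.

Lemma law_relabel X : measurable X ->
  distribution P (mfun_of mZs) X = distribution P (mfun_of measurable_vec) X.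
Proof.
move=> mX.
apply: (@g_sigma_algebra_measure_unique _ R V (@boxes R K) _ (fun _ => setT)) => //.
- by move=> _ [b mb ->]; exact: measurable_box.
- by move=> _; exact: boxesT.
- by apply/seteqP; split => // x _; exists 0%N.
- exact: boxes_setI.
- move=> _ [b mb ->]; rewrite /= /distribution /pushforward /=.
  have -> : (fun w => relabel s (Z w)) @^-1` [set x | forall k, b k (x k)] =
            [set w | forall k, b (s k) (Z w k)].
    apply/seteqP; split => w /= h k; have := h (s k); by rewrite /relabel sK.
  rewrite (indepZ (C := fun k => b (s k))) // indepZ // (reindex_inj (inv_inj sK)) /=.
  by apply: eq_bigr => k _; rewrite sK s_law.
- move=> k; apply: (le_lt_trans (probability_le1 (distribution P (mfun_of mZs)) measurableT)).
  by rewrite ltry.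
Qed.

Lemma ge0_integral_relabel (h : V -> \bar R) :
  measurable_fun setT h -> (forall z, (0 <= h z)%E) ->
  (\int[P]_w h (relabel s (Z w)) = \int[P]_w h (Z w))%E.
Proof.
move=> mh h0.
have -> : (\int[P]_w h (relabel s (Z w)) = \int[distribution P (mfun_of mZs)]_z h z)%E.
  by rewrite /distribution ge0_integral_pushforward.
have -> : (\int[P]_w h (Z w) = \int[distribution P (mfun_of measurable_vec)]_z h z)%E.
  by rewrite /distribution ge0_integral_pushforward.
by apply: eq_measure_integral => A mA _; exact: law_relabel.
Qed.

Lemma integrable_relabel (h : V -> \bar R) : measurable_fun setT h ->
  P.-integrable setT (fun w => h (Z w)) ->
  P.-integrable setT (fun w => h (relabel s (Z w))).
Proof.
move=> mh /integrableP [_ hfin]; apply/integrableP; split.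
  exact: measurableT_comp mh mZs.
rewrite (@ge0_integral_relabel (abse \o h)) //; last by move=> z /=.
by apply: measurableT_comp; last exact: mh.
Qed.

Lemma integral_relabel (h : V -> \bar R) : measurable_fun setT h ->
  P.-integrable setT (fun w => h (Z w)) ->
  (\int[P]_w h (relabel s (Z w)) = \int[P]_w h (Z w))%E.
Proof.
move=> mh ih.
have -> : (\int[P]_w h (relabel s (Z w)) = \int[distribution P (mfun_of mZs)]_z h z)%E.
  by rewrite /distribution integral_pushforward //; exact: integrable_relabel.
have -> : (\int[P]_w h (Z w) = \int[distribution P (mfun_of measurable_vec)]_z h z)%E.
  by rewrite /distribution integral_pushforward.
by apply: eq_measure_integral => A mA _; exact: law_relabel.
Qed.

End Relabel.

End IndependentCoordinates.

Section Flip.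
Context (I : finType).
Local Notation K := (option (I + I)).

Definition flip (D : {set I}) (k : K) : K :=
  match k with
  | Some (inl i) => if i \in D then Some (inr i) else k
  | Some (inr i) => if i \in D then Some (inl i) else k
  | None => None
  end.

Definition left_in (A : {set I}) (k : K) : bool :=
  if k is Some (inl i) then i \in A else false.
Definition right_in (A : {set I}) (k : K) : bool :=
  if k is Some (inr i) then i \in A else false.
Definition flipped (A : {set I}) (k : K) : bool := left_in A k || right_in A k.

Lemma flipK D : involutive (flip D).
Proof. by case=> [[i|i]|] //=; case: ifP => iD /=; rewrite iD. Qed.

Lemma flip_comm X Y k : flip X (flip Y k) = flip Y (flip X k).
Proof.
by case: k => [[i|i]|] //=; case iX: (i \in X); case iY: (i \in Y); rewrite /= ?iX ?iY.
Qed.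

Lemma flip_id A k : ~~ flipped A k -> flip A k = k.
Proof. by rewrite /flipped; case: k => [[i|i]|] //=; rewrite ?orbF => /negbTE ->. Qed.

Lemma flipped_flip A k : flipped A (flip A k) = flipped A k.
Proof. by rewrite /flipped; case: k => [[i|i]|] //=; case: ifP => iA /=; rewrite iA. Qed.

Lemma right_in_flip A k : right_in A (flip A k) = left_in A k.
Proof. by case: k => [[i|i]|] //=; case: ifP => iA /=; rewrite ?iA. Qed.

Lemma flip_setD_flip (A B : {set I}) k : A \subset B ->
  flip (B :\: A) (flip A k) = flip B k /\ flip (B :\: A) (flip B k) = flip A k.
Proof.
move=> /fintype.subsetP AB; case: k => [[i|i]|] //=; have := AB i;
  by case iA: (i \in A); case iB: (i \in B); rewrite /= !inE iA iB /= ?iA ?iB // => /(_ isT).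
Qed.

Lemma left_right_disjoint A k : ~~ (left_in A k && right_in A k).
Proof. by case: k => [[i|i]|] //=; rewrite andbF. Qed.

End Flip.

Definition merge (K : finType) (R : realType) (p : pred K) (x u : boxT R K) : boxT R K :=
  fun k => if p k then u k else x k.

Lemma measurable_merge d (T : measurableType d) (K : finType) (R : realType)
    (p : pred K) (f g : T -> boxT R K) :
  measurable_fun setT f -> measurable_fun setT g ->
  measurable_fun setT (fun t => merge p (f t) (g t)).
Proof.
move=> mf mg; apply: measurable_fun_coords => k; rewrite /merge.
by case: (p k); apply: measurableT_comp (measurable_coord k) _.
Qed.

Definition ys (R : realType) (I : finType) (z : boxT R (option (I + I))) : cylT R I :=
  fun i => z (Some (inl i)).

Lemma measurable_ys (R : realType) (I : finType) : measurable_fun setT (@ys R I).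
Proof. by apply: measurable_fun_cyl => i; exact: measurable_coord. Qed.

Section Resampling.
Context d (Omega : measurableType d) (R : realType) (P : probability Omega R)
  (I : finType).
Local Notation K := (option (I + I)).
Local Notation V := (boxT R K).
Local Notation swap A := (relabel (flip A)).

Variable Z : Omega -> V.
Hypotheses (mZ : forall k, measurable_fun setT (fun w => Z w k))
  (indepZ : coords_indep P Z)
  (copy_law : forall i C, measurable C ->
     P ((fun w => Z w (Some (inr i))) @^-1` C) = P ((fun w => Z w (Some (inl i))) @^-1` C)).

Lemma flip_law A k C : measurable C ->
  P ((fun w => Z w (flip A k)) @^-1` C) = P ((fun w => Z w k) @^-1` C).
Proof. by move=> mC; case: k => [[i|i]|] //=; case: (i \in A) => //=; rewrite copy_law. Qed.

Lemma integral_swap A (h : V -> \bar R) : measurable_fun setT h ->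
  P.-integrable setT (fun w => h (Z w)) ->
  (\int[P]_w h (swap A (Z w)) = \int[P]_w h (Z w))%E.
Proof. by move=> mh ih; exact: (integral_relabel mZ indepZ (flipK A) (flip_law A) mh ih). Qed.

Lemma integrable_swap A (h : V -> \bar R) : measurable_fun setT h ->
  P.-integrable setT (fun w => h (Z w)) ->
  P.-integrable setT (fun w => h (swap A (Z w))).
Proof. by move=> mh ih; exact: (integrable_relabel mZ indepZ (flipK A) (flip_law A) mh ih). Qed.

Section FixedSet.
Variable A : {set I}.

Definition ignores_right (g : V -> R) :=
  forall z z', (forall k, ~~ right_in A k -> z k = z' k) -> g z = g z'.

(* Up to the ignored coordinates, the two factors are [g] applied to the [Y]-
   and to the [Y']-block of [A]: independent with the same law, so the integral
   is a square. *)
Lemma integral_mul_swap_mask_ge0 (g : V -> R) (M : R) :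
  measurable_fun setT g -> (forall z, `|g z| <= M) -> ignores_right g ->
  (0 <= \int[P]_w (g (vmask (flipped A) (Z w)) * g (swap A (vmask (flipped A) (Z w))))%:E)%E.
Proof.
move=> mg gM gR.
have mgm p : measurable_fun setT (fun w => g (vmask p (Z w))).
  exact: measurableT_comp mg (measurable_vmask mZ p).
have mgs p : measurable_fun setT (fun w => g (swap A (vmask p (Z w)))).
  exact: measurableT_comp mg (measurableT_comp (measurable_relabel _) (measurable_vmask mZ p)).
have eg w : g (vmask (flipped A) (Z w)) * g (swap A (vmask (flipped A) (Z w))) =
            g (vmask (left_in A) (Z w)) * g (swap A (vmask (right_in A) (Z w))).
  congr (_ * _); apply: gR => k kR; rewrite /vmask /relabel /flipped.
    by rewrite (negbTE kR) orbF.
  by rewrite -/(flipped A _) flipped_flip right_in_flip /flipped (negbTE kR) orbF.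
have mean_swap : (\int[P]_w (g (swap A (vmask (right_in A) (Z w))))%:E =
                  \int[P]_w (g (vmask (left_in A) (Z w)))%:E)%E.
  transitivity (\int[P]_w (g (vmask (left_in A) (swap A (Z w))))%:E)%E.
    apply: eq_integral => w _; congr (g _)%:E; apply/funext => k.
    by rewrite /vmask /relabel right_in_flip.
  apply: (@integral_swap A (fun z => (g (vmask (left_in A) z))%:E)).
    apply/measurable_EFinP; apply: measurableT_comp mg _.
    apply: measurable_fun_coords => k; rewrite /vmask.
    by case: (left_in A k); [exact: measurable_coord | exact: measurable_cst].
  exact: integrable_bounded (mgm _) (fun w => gM _).
under eq_integral do rewrite eg.
rewrite (integral_masks_mul mZ indepZ (g := g) (h := fun u => g (swap A u))) //; last 5 first.
- exact: left_right_disjoint.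
- exact: measurableT_comp mg (measurable_relabel _).
- exact: integrable_bounded (mgm _) (fun w => gM _).
- exact: integrable_bounded (mgs _) (fun w => gM _).
- apply: integrable_bounded (M * M) _ _; first exact: measurable_funM.
  by move=> w; rewrite normrM ler_pM.
rewrite mean_swap.
have c_fin := integrable_fin_num measurableT
  (integrable_bounded P (mgm (left_in A)) (fun w => gM _)).
by rewrite -(fineK c_fin) -EFinM lee_fin -expr2 sqr_ge0.
Qed.

(* Condition on the coordinates not moved by [flip A]. *)
Lemma integral_mul_swap_ge0_bounded (Psi : V -> R) (M : R) :
  measurable_fun setT Psi -> (forall z, `|Psi z| <= M) -> ignores_right Psi ->
  (0 <= \int[P]_w (Psi (Z w) * Psi (swap A (Z w)))%:E)%E.
Proof.
move=> mPsi PsiM PsiR.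
have PsiM2 a b : `|Psi a * Psi b| <= M * M by rewrite normrM ler_pM.
pose Phi (xu : V * V) := Psi (merge (flipped A) xu.1 xu.2) *
                         Psi (merge (flipped A) xu.1 (swap A xu.2)).
have mPhi : measurable_fun setT Phi.
  apply: measurable_funM; apply: measurableT_comp mPsi _; apply: measurable_merge.
  - exact: measurable_fst.
  - exact: measurable_snd.
  - exact: measurable_fst.
  - exact: measurableT_comp (measurable_relabel _) measurable_snd.
have ePhi w : Psi (Z w) * Psi (swap A (Z w)) =
              Phi (vmask (predC (flipped A)) (Z w), vmask (flipped A) (Z w)).
  rewrite /Phi /=; congr (Psi _ * Psi _); apply/funext => k;
    rewrite /merge /vmask /relabel /=; first by case: (flipped A k).
  by rewrite flipped_flip; case: (boolP (flipped A k)) => //= kA; rewrite flip_id.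
under eq_integral do rewrite ePhi.
rewrite integral_masks //; last 2 first.
- by move=> k; rewrite /= andNb.
- apply: integrable_bounded (M * M) _ _ => [|t]; last exact: PsiM2.
  exact: measurableT_comp mPhi (measurable_fun_pair (measurable_vmask mZ _) (measurable_vmask mZ _)).
apply: integral_ge0 => x _.
have mPhix : measurable_fun setT (fun u => Phi (x, u)).
  by apply: measurableT_comp mPhi _; apply: measurable_fun_pair => //; exact: measurable_cst.
rewrite /law_mask /distribution integral_pushforward //=; last 3 first.
- exact: measurable_vmask.
- exact/measurable_EFinP.
- apply: integrable_bounded (M * M) _ _ => [|t]; last exact: PsiM2.
  exact: measurableT_comp mPhix (measurable_vmask mZ _).
apply: (@integral_mul_swap_mask_ge0 (fun u => Psi (merge (flipped A) x u)) M).
- apply: measurableT_comp mPsi (measurable_merge _ _ _) => //; exact: measurable_cst.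
- by move=> z.
- move=> u u' uu'; apply: PsiR => k kR; rewrite /merge.
  by case: (flipped A k) => //; exact: uu'.
Qed.

Lemma integral_mul_swap_ge0 (Psi : V -> R) :
  measurable_fun setT Psi -> ignores_right Psi ->
  P.-integrable setT (fun w => (Psi (Z w) ^+ 2)%:E) ->
  (0 <= \int[P]_w (Psi (Z w) * Psi (swap A (Z w)))%:E)%E.
Proof.
move=> mPsi PsiR iu2.
pose u w := Psi (Z w); pose v w := Psi (swap A (Z w)).
have mu : measurable_fun setT u := measurableT_comp mPsi (measurable_vec mZ).
have mv : measurable_fun setT v :=
  measurableT_comp mPsi (measurableT_comp (measurable_relabel _) (measurable_vec mZ)).
have iv2 : P.-integrable setT (fun w => (v w ^+ 2)%:E).
  apply: (@integrable_swap A (fun z => (Psi z ^+ 2)%:E)) => //.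
  exact/measurable_EFinP/measurable_funX.
pose f_ n w := (clamp n (u w) * clamp n (v w))%:E.
have mf_ n : measurable_fun setT (f_ n).
  by apply/measurable_EFinP; apply: measurable_funM; exact: measurable_clamp.
have muv : measurable_fun setT (fun w => (u w * v w)%:E).
  by apply/measurable_EFinP; exact: measurable_funM.
have f_uv : {ae P, forall w, setT w -> f_ ^~ w @ \oo --> (u w * v w)%:E}.
  apply: aeW => w _; apply: cvg_near_cst.
  by near=> n; rewrite /f_ !clamp_id //; near: n; exact: nbhs_infty_ger.
have iuv2 : P.-integrable setT (fun w => (u w ^+ 2 + v w ^+ 2)%:E).
  by under eq_fun do rewrite EFinD; exact: integrableD.
have f_le : {ae P, forall w n, setT w -> (`|f_ n w| <= (u w ^+ 2 + v w ^+ 2)%:E)%E}.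
  apply: aeW => w n _; rewrite abse_EFin lee_fin.
  by apply: (le_trans (abs_mul_le_sqrD _ _)); apply: lerD; exact: clamp_sqr_le.
have [_ _ lim_f_] := dominated_convergence measurableT mf_ muv f_uv iuv2 f_le.
rewrite -(cvg_lim (@ereal_hausdorff R) lim_f_).
apply: lime_ge; first exact: cvgP lim_f_.
apply: nearW => n /=.
apply: (@integral_mul_swap_ge0_bounded (fun z => clamp n (Psi z)) n%:R).
- exact: measurable_clamp.
- by move=> z; exact: clamp_norm_le.
- by move=> z z' zz'; rewrite (PsiR z z' zz').
Unshelve. all: by end_near.
Qed.

End FixedSet.

Section Antitone.
Variables (f : (I -> R) -> R) (mf : borel_fun f)
  (f2 : P.-integrable setT (fun w => (f (ys (Z w)) ^+ 2)%:E)).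

Let F (z : V) := f (ys z).

Let mF : measurable_fun setT F :=
  measurableT_comp (measurable_fun_borel mf) (@measurable_ys R I).

Lemma measurable_resample A : measurable_fun setT (fun w => F (swap A (Z w))).
Proof. exact: measurableT_comp mF (measurableT_comp (measurable_relabel _) (measurable_vec mZ)). Qed.

Lemma sqr_integrable_resample A :
  P.-integrable setT (fun w => (F (swap A (Z w)) ^+ 2)%:E).
Proof.
apply: (@integrable_swap A (fun z => (F z ^+ 2)%:E)) => //.
exact/measurable_EFinP/measurable_funX.
Qed.

Lemma integrable_mul_resample A :
  P.-integrable setT (EFin \o (fun w => F (Z w) * F (swap A (Z w)))).
Proof.
apply: integrable_mul_of_sqr => //; last exact: sqr_integrable_resample.
  exact: measurableT_comp mF (measurable_vec mZ).
exact: measurable_resample.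
Qed.

Lemma integrable_resample_mul A B :
  P.-integrable setT (EFin \o (fun w => F (swap A (Z w)) * F (swap B (Z w)))).
Proof.
apply: integrable_mul_of_sqr; try exact: measurable_resample.
all: exact: sqr_integrable_resample.
Qed.

Lemma integral_mul_resample_flip (C X X' : {set I}) :
  (forall k, flip C (flip X' k) = flip X k) ->
  (\int[P]_w (F (swap C (Z w)) * F (swap X (Z w)))%:E =
   \int[P]_w (F (Z w) * F (swap X' (Z w)))%:E)%E.
Proof.
move=> CX; rewrite -(@integral_swap C (fun z => (F z * F (swap X' z))%:E)).
- apply: eq_integral => w _; congr (_ * f _)%:E; apply/funext => i.
  by rewrite /ys /relabel CX.
- apply/measurable_EFinP; apply: measurable_funM => //.
  exact: measurableT_comp mF (measurable_relabel _).
- exact: integrable_mul_resample.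
Qed.

(* The integral of [Psi (Z) * Psi (Z^A)] expands to
   [2 (E[f(Y) f(Y^A)] - E[f(Y) f(Y^B)])]. *)
Lemma integral_mul_resample_le (A B : {set I}) : A \subset B ->
  (\int[P]_w (F (Z w) * F (swap B (Z w)))%:E <=
   \int[P]_w (F (Z w) * F (swap A (Z w)))%:E)%E.
Proof.
move=> AB; set C := B :\: A.
have flipC k := flip_setD_flip k AB.
pose t X w := F (swap X (Z w)).
pose Psi z := F z - F (swap C z).
have mFZ : measurable_fun setT (fun w => F (Z w)).
  exact: measurableT_comp mF (measurable_vec mZ).
have PsiR : ignores_right A Psi.
  move=> z z' zz'; rewrite /Psi /F; congr (f _ - f _); apply/funext => i; apply: zz' => //=.
  by rewrite /C; case: ifP => //=; rewrite !inE => /andP[].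
have mPsi : measurable_fun setT Psi.
  by apply: measurable_funB => //; exact: measurableT_comp mF (measurable_relabel _).
have := @integral_mul_swap_ge0 A Psi mPsi PsiR
  (sqr_integrable_subr mFZ (measurable_resample C) f2 (sqr_integrable_resample C)).
have ePsi w : Psi (Z w) * Psi (swap A (Z w)) =
    (F (Z w) * t A w - F (Z w) * t B w) - (t C w * t A w - t C w * t B w).
  rewrite /Psi /t; have -> : F (swap C (swap A (Z w))) = F (swap B (Z w)).
    by congr f; apply/funext => i; rewrite /ys /relabel flip_comm (proj1 (flipC _)).
  by ring.
under eq_integral do rewrite ePsi.
have iB (u v : Omega -> R) : P.-integrable setT (EFin \o u) ->
    P.-integrable setT (EFin \o v) -> P.-integrable setT (EFin \o (fun w => u w - v w)).
  by move=> iu iv; apply: (eq_integrable measurableT _ _ _ (integrableB measurableT iu iv)).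
rewrite integralB_EFin //=; try apply: iB;
  try exact: integrable_mul_resample; try exact: integrable_resample_mul.
rewrite !integralB_EFin //=; try exact: integrable_mul_resample;
  try exact: integrable_resample_mul.
rewrite (integral_mul_resample_flip (fun k => proj2 (flipC k))).
rewrite (integral_mul_resample_flip (fun k => proj1 (flipC k))).
have finA := integrable_fin_num measurableT (integrable_mul_resample A).
have finB := integrable_fin_num measurableT (integrable_mul_resample B).
by rewrite -(fineK finA) -(fineK finB) -!EFinB !lee_fin; lra.
Qed.

End Antitone.

End Resampling.

Section RandomSets.
Context d (Omega : measurableType d) (R : realType) (P : probability Omega R)
  (I : finType) (Y Y' : I -> Omega -> R) (S S2 : Omega -> {set I}).
Hypotheses (mY : forall i, measurable_fun setT (Y i))
  (mY' : forall i, measurable_fun setT (Y' i))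
  (mS : forall A : {set I}, measurable (S @^-1` [set A]))
  (mS2 : forall A : {set I}, measurable (S2 @^-1` [set A]))
  (indep : mutual_indep P (lemma6p1_events Y Y' S S2))
  (same_law : forall (i j : I) (B : set R), measurable B ->
     P (Y i @^-1` B) = P (Y j @^-1` B) /\ P (Y' i @^-1` B) = P (Y j @^-1` B)).
Local Notation K := (option (I + I)).
Local Notation V := (boxT R K).
Local Notation swap A := (relabel (flip A)).

Definition pair_event (Q : {set {set I} * {set I}}) : set Omega :=
  [set w | (S w, S2 w) \in Q].

Lemma measurable_pair_event Q : measurable (pair_event Q).
Proof.
have -> : pair_event Q =
    \bigcup_(p in [set p | p \in Q]) (S @^-1` [set p.1] `&` S2 @^-1` [set p.2]).
  apply/seteqP; split => w /=; first by move=> wQ; exists (S w, S2 w).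
  by move=> [[A B] /= pQ [/= h1 h2]]; rewrite /pair_event /= h1 h2.
apply: fin_bigcup_measurable; first exact: finite_finset.
by move=> p _; apply: measurableI.
Qed.

(* The extra coordinate [None] carries the indicator of an event of [(S, S2)],
   so that the independence of [(S, S2)] from [(Y, Y')] becomes an independence
   of coordinates. *)
Definition joint (E : set Omega) (w : Omega) : V := fun k =>
  match k with
  | None => \1_E w
  | Some (inl i) => Y i w
  | Some (inr i) => Y' i w
  end.

Lemma measurable_joint Q k :
  measurable_fun setT (fun w => joint (pair_event Q) w k).
Proof.
case: k => [[i|i]|] /=; [exact: mY | exact: mY' |].
exact: measurable_indic (measurable_pair_event Q).
Qed.

Lemma indic_pair_event Q w : \1_(pair_event Q) w = ((S w, S2 w) \in Q)%:R :> R.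
Proof.
by rewrite indicE; case: (boolP ((S w, S2 w) \in Q)) => wQ;
  [rewrite mem_set | rewrite memNset // /pair_event /= (negbTE wQ)].
Qed.

Lemma coords_indep_joint Q : coords_indep P (joint (pair_event Q)).
Proof.
move=> C mC; rewrite -indep.
  by congr (P _); apply/seteqP; split => w /= h k; [move=> _|]; exact: h.
case=> [[i|i]|] /=; [by exists (C (Some (inl i))) | by exists (C (Some (inr i))) |].
exists (finset (fun p => `[< C None (p \in Q)%:R >])) => //.
by apply/seteqP; split => w /=; rewrite indic_pair_event inE asboolE.
Qed.

Lemma copy_law_joint E i C : measurable C ->
  P ((fun w => joint E w (Some (inr i))) @^-1` C) =
  P ((fun w => joint E w (Some (inl i))) @^-1` C).
Proof. by move=> mC; have [_ ->] := same_law i i mC. Qed.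

Definition ignores_none (h : V -> R) :=
  forall z z', (forall k, k != None -> z k = z' k) -> h z = h z'.

Lemma ignores_none_joint h E E' w : ignores_none h -> h (joint E w) = h (joint E' w).
Proof. by move=> hN; apply: hN => -[]. Qed.

Lemma integral_indic_mul Q (h : V -> R) : measurable_fun setT h -> ignores_none h ->
  P.-integrable setT (EFin \o (fun w => h (joint (pair_event Q) w))) ->
  (\int[P]_w (\1_(pair_event Q) w * h (joint (pair_event Q) w))%:E =
   P (pair_event Q) * \int[P]_w (h (joint (pair_event Q) w))%:E)%E.
Proof.
move=> mh hN ih; set Z := joint (pair_event Q).
have mZ := measurable_joint Q; have iZ := coords_indep_joint Q.
have hS w : h (vmask (predC1 None) (Z w)) = h (Z w).
  by apply: hN => k kN; rewrite /vmask /= kN.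
have eN w : vmask (pred1 None) (Z w) None = \1_(pair_event Q) w by rewrite /vmask /= ?eqxx.
have iN : P.-integrable setT (EFin \o (fun w => vmask (pred1 None) (Z w) None)).
  apply: eq_integrable (integrable_indic P (measurable_pair_event Q)) => //.
have -> : (\int[P]_w (\1_(pair_event Q) w * h (Z w))%:E =
           \int[P]_w (vmask (pred1 None) (Z w) None * h (vmask (predC1 None) (Z w)))%:E)%E.
  by apply: eq_integral => w _; rewrite eN hS.
rewrite (integral_masks_mul mZ iZ (g := fun z => z None)) //.
- congr (_ * _)%E; last by apply: eq_integral => w _; rewrite hS.
  transitivity (\int[P]_w (\1_(pair_event Q) w)%:E)%E.
    by apply: eq_integral => w _; rewrite eN.
  by rewrite integral_indic ?setIT //; exact: measurable_pair_event.
- by move=> k; rewrite /= andbN.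
- exact: measurable_coord.
- by apply: eq_integrable ih => // w _; rewrite /= hS.
- apply: le_integrable ih => //.
    apply/measurable_EFinP; apply: measurable_funM.
      exact: measurableT_comp (measurable_coord _) (measurable_vmask mZ _).
    exact: measurableT_comp mh (measurable_vmask mZ _).
  move=> w _ /=; rewrite eN hS lee_fin normrM indicE.
  by case: (w \in _); rewrite ?normr1 ?normr0 ?mul1r ?mul0r.
Qed.

Lemma integral_pair_decomp Q0 (hs : {set I} * {set I} -> V -> R) :
  (forall p, measurable_fun setT (hs p)) -> (forall p, ignores_none (hs p)) ->
  (forall p, P.-integrable setT (EFin \o (fun w => hs p (joint (pair_event Q0) w)))) ->
  P.-integrable setT (EFin \o (fun w => hs (S w, S2 w) (joint (pair_event Q0) w))) /\
  (\int[P]_w (hs (S w, S2 w) (joint (pair_event Q0) w))%:E =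
   \sum_p P (pair_event [set p]%SET) * \int[P]_w (hs p (joint (pair_event Q0) w))%:E)%E.
Proof.
move=> mh hN ih.
have ihQ p Q : P.-integrable setT (EFin \o (fun w => hs p (joint (pair_event Q) w))).
  by apply: eq_integrable (ih p) => // w _ /=; congr EFin; exact: ignores_none_joint.
pose g p w := (\1_(pair_event [set p]%SET) w * hs p (joint (pair_event [set p]%SET) w))%:E.
have ig p : P.-integrable setT (g p).
  apply: (le_integrable measurableT _ _ (ihQ p [set p]%SET)).
    apply/measurable_EFinP; apply: measurable_funM.
      exact: measurable_indic (measurable_pair_event _).
    exact: measurableT_comp (mh p) (measurable_fun_coords (measurable_joint _)).
  move=> w _ /=; rewrite lee_fin normrM indicE.
  by case: (w \in _); rewrite ?normr1 ?normr0 ?mul1r ?mul0r.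
have eg w : (hs (S w, S2 w) (joint (pair_event Q0) w))%:E = (\sum_p g p w)%E.
  rewrite (bigD1 (S w, S2 w)) //= big1 ?adde0.
    by rewrite /g indic_pair_event inE eqxx mul1r; congr EFin; exact: ignores_none_joint.
  by move=> p pw; rewrite /g indic_pair_event inE eq_sym (negbTE pw) mul0r.
split.
  apply: (eq_integrable measurableT (fun w => \sum_p g p w)) => [w _|]; first by rewrite /= eg.
  by apply: integrable_sum => // p _; exact: ig.
under eq_integral do rewrite eg.
rewrite integral_sum //; apply: eq_bigr => p _.
rewrite integral_indic_mul //; congr (_ * _)%E; apply: eq_integral => w _.
by congr EFin; exact: ignores_none_joint.
Qed.

Lemma pair_event_null (p : {set I} * {set I}) :
  {ae P, forall w, S w \subset S2 w} -> ~~ (p.1 \subset p.2) ->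
  P (pair_event [set p]%SET) = 0%E.
Proof.
move=> [N [mN PN0 subN]] p12; apply/eqP; rewrite eq_le measure_ge0 andbT -PN0.
apply: le_measure; rewrite ?inE; [exact: measurable_pair_event | exact: mN |].
move=> w; rewrite /pair_event /= inE => /eqP wp; apply: subN => /= Sw.
by move: p12; rewrite -wp /= Sw.
Qed.

Lemma resample_joint E D w : resample Y Y' D w = ys (swap D (joint E w)).
Proof. by apply/funext => i; rewrite /resample /ys /relabel /=; case: (i \in D). Qed.

Section RandomResampling.
Variables (f : (I -> R) -> R) (mf : borel_fun f)
  (f2 : P.-integrable setT (fun w => ((f (vec Y w)) ^+ 2)%:E))
  (sel : {set I} * {set I} -> {set I}).

Local Notation Z := (joint (pair_event finset.set0)).
Let mZ := measurable_joint finset.set0.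
Let iZ := coords_indep_joint finset.set0.
Let cZ := copy_law_joint (pair_event finset.set0).
Let F (z : V) := f (ys z).
Let mF : measurable_fun setT F :=
  measurableT_comp (measurable_fun_borel mf) (@measurable_ys R I).

Let resample_Z D w : resample Y Y' D w = ys (swap D (Z w)).
Proof. exact: resample_joint. Qed.

Let ignores_none_resample D : ignores_none (fun z => F (swap D z)).
Proof.
move=> z z' zz'; congr f; apply/funext => i; apply: zz'.
by rewrite /=; case: (i \in D).
Qed.

Let ignores_none_F : ignores_none F.
Proof. by move=> z z' zz'; congr f; apply/funext => i; exact: zz'. Qed.

Let iF : P.-integrable setT (EFin \o (fun w => F (Z w))).
Proof. exact: integrable_of_sqr (measurableT_comp mF (measurable_vec mZ)) f2. Qed.

Let iFswap D : P.-integrable setT (EFin \o (fun w => F (swap D (Z w)))).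
Proof.
exact: integrable_of_sqr (measurable_resample mZ mf D) (sqr_integrable_resample mZ iZ cZ mf f2 D).
Qed.

Lemma integral_resample_random :
  P.-integrable setT (EFin \o (fun w => f (resample Y Y' (sel (S w, S2 w)) w))) /\
  (\int[P]_w (f (resample Y Y' (sel (S w, S2 w)) w))%:E = \int[P]_w (f (vec Y w))%:E)%E.
Proof.
have hN p : ignores_none (fun z => F (swap (sel p) z) - F z).
  by move=> z z' zz'; rewrite (ignores_none_resample _ zz') (ignores_none_F zz').
have mh p : measurable_fun setT (fun z => F (swap (sel p) z) - F z).
  exact: measurable_funB (measurableT_comp mF (measurable_relabel _)) mF.
have ih p : P.-integrable setT (EFin \o (fun w => F (swap (sel p) (Z w)) - F (Z w))).
  by apply: (eq_integrable measurableT _ _ _ (integrableB measurableT (iFswap _) iF)).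
have [idiff ediff] := @integral_pair_decomp finset.set0 _ mh hN ih.
have eres w : f (resample Y Y' (sel (S w, S2 w)) w) =
              (F (swap (sel (S w, S2 w)) (Z w)) - F (Z w)) + F (Z w).
  by rewrite subrK resample_Z.
split.
  apply: (eq_integrable measurableT _ _ _ (integrableD measurableT idiff iF)) => w _.
  by rewrite /= eres.
under eq_integral do rewrite eres EFinD.
rewrite integralD_EFin // ediff big1 ?add0e // => p _.
rewrite integralB_EFin // (integral_swap mZ iZ cZ (sel p) (h := fun z => (F z)%:E)) ?subee ?mule0 //.
- exact: integrable_fin_num.
- exact/measurable_EFinP.
Qed.

Lemma integral_mul_resample_random :
  P.-integrable setT (EFin \o (fun w =>
    f (vec Y w) * f (resample Y Y' (sel (S w, S2 w)) w))) /\
  (\int[P]_w (f (vec Y w) * f (resample Y Y' (sel (S w, S2 w)) w))%:E =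
   \sum_p P (pair_event [set p]%SET) *
     \int[P]_w (f (vec Y w) * f (resample Y Y' (sel p) w))%:E)%E.
Proof.
have hN p : ignores_none (fun z => F z * F (swap (sel p) z)).
  by move=> z z' zz'; rewrite (ignores_none_resample _ zz') (ignores_none_F zz').
have mh p : measurable_fun setT (fun z => F z * F (swap (sel p) z)).
  exact: measurable_funM mF (measurableT_comp mF (measurable_relabel _)).
have [imul emul] := @integral_pair_decomp finset.set0 _ mh hN
  (fun p => integrable_mul_resample mZ iZ cZ mf f2 (sel p)).
have eres D w : f (resample Y Y' D w) = F (swap D (Z w)).
  by rewrite resample_Z.
split.
  by apply: (eq_integrable measurableT _ _ _ imul) => w _; rewrite /= eres.
under eq_integral do rewrite eres.
rewrite emul; apply: eq_bigr => p _; congr (_ * _)%E.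
by apply: eq_integral => w _; rewrite eres.
Qed.

Lemma integral_mul_resample_antitone (A B : {set I}) : A \subset B ->
  (\int[P]_w (f (vec Y w) * f (resample Y Y' B w))%:E <=
   \int[P]_w (f (vec Y w) * f (resample Y Y' A w))%:E)%E.
Proof.
move=> AB; have := integral_mul_resample_le mZ iZ cZ mf f2 AB.
under eq_integral do rewrite -resample_Z.
by under [X in (_ <= X)%E]eq_integral do rewrite -resample_Z.
Qed.

End RandomResampling.

End RandomSets.

Unset Implicit Arguments.

Theorem lemma6p1 (d : measure_display) (Omega : measurableType d)
  (R : realType) (P : probability Omega R) (I : finType)
  (Y Y' : I -> Omega -> R) (S S2 : Omega -> {set I}) (f : (I -> R) -> R)
  (mY : forall i, measurable_fun setT (Y i))
  (mY' : forall i, measurable_fun setT (Y' i))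
  (mS : forall A : {set I}, measurable (S @^-1` [set A]))
  (mS2 : forall A : {set I}, measurable (S2 @^-1` [set A]))
  (indep : mutual_indep P (lemma6p1_events Y Y' S S2))
  (same_law : forall (i j : I) (B : set R), measurable B ->
     P (Y i @^-1` B) = P (Y j @^-1` B) /\ P (Y' i @^-1` B) = P (Y j @^-1` B))
  (mf : borel_fun f)
  (f2 : P.-integrable setT (fun w => ((f (vec Y w)) ^+ 2)%:E))
  (sub : {ae P, forall w, S w \subset S2 w}) :
  (covariance P (fun w => f (vec Y w)) (fun w => f (resample Y Y' (S2 w) w))
   <= covariance P (fun w => f (vec Y w)) (fun w => f (resample Y Y' (S w) w)))%E.
Proof.
have ia : P.-integrable setT (EFin \o (fun w => f (vec Y w))).
  exact: integrable_of_sqr (measurableT_comp (measurable_fun_borel mf) (measurable_fun_cyl mY)) f2.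
have mean := integral_resample_random mY mY' mS mS2 indep same_law mf f2.
have [iS ES] := mean fst; have [iS2 ES2] := mean snd.
have mean_mul := integral_mul_resample_random mY mY' mS mS2 indep same_law mf f2.
have [iaS EaS] := mean_mul fst; have [iaS2 EaS2] := mean_mul snd.
have le_mul : (\int[P]_w (f (vec Y w) * f (resample Y Y' (S2 w) w))%:E <=
               \int[P]_w (f (vec Y w) * f (resample Y Y' (S w) w))%:E)%E.
  rewrite EaS EaS2; apply: lee_sum => p _.
  have [p12|p12] := boolP (p.1 \subset p.2).
    apply: lee_wpmul2l; first exact: measure_ge0.
    exact: (integral_mul_resample_antitone mY mY' mS mS2 indep same_law mf f2 p12).
  by rewrite (pair_event_null mS mS2 sub p12) !mul0e.
rewrite !covarianceE; try exact/Lfun1_integrable.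
rewrite !unlock /= ES ES2.
have fS := integrable_fin_num measurableT iaS.
have fS2 := integrable_fin_num measurableT iaS2.
have fa := integrable_fin_num measurableT ia.
move: le_mul; rewrite -(fineK fS) -(fineK fS2) -(fineK fa).
by rewrite -EFinM -!EFinB !lee_fin => /lerB; apply.
Qed.
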